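(* Let $\nu,k$ be integers with $2\nu-1\ge k\ge\nu-1\ge1$. Then $N(2\nu,k)=2$ if $k\equiv2\nu+1\pmod3$, and $N(2\nu,k)=0$ otherwise.
   Context: For $n>k\ge1$, $N(n,k)$ is the nullity of the $n\times n$ skew-symmetric Toeplitz matrix $A(n,k)$ whose first $k$ superdiagonals have all entries $1$ and whose remaining superdiagonals have all entries $0$. *)

From mathcomp Require Import all_boot all_algebra.
Set Implicit Arguments. Unset Strict Implicit. Unset Printing Implicit Defensive.
Import GRing.Theory.
Local Open Scope ring_scope.

Definition Amx (n k : nat) : 'M[rat]_n :=
  \matrix_(i < n, j < n)
    (if ((i < j)%N && (j <= i + k)%N) then 1
     else if ((j < i)%N && (i <= j + k)%N) then -1 else 0).

Definition Nnull (n k : nat) : nat := (n - \rank (Amx n k))%N.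

From mathcomp Require Import all_boot all_algebra.
From mathcomp Require Import zify lra.
Import GRing.Theory.

(* Let S_j be the j-th prefix sum of a row vector u, so that S_j = S_n for
   j >= n.  The j-th entry of u A(n,k) is (S_j - S_{j-k}) - (S_{j+k+1} - S_{j+1}),
   hence u is in the left kernel iff S_i + S_{i+1} = S_{i+k+1} + S_{i-k} for all
   i < n.  For n = 2nu and nu <= k+1 <= n, put a = S_1, T = S_n and m = n-k-1.
   The recurrence forces S to be the 3-periodic sequence 0, a, T-a on [0, m], to
   alternate between S_m and T - S_m on [m, k+1] (and S_m = S_{k+1} = a since
   k+1-m is even), and to satisfy S_{k+2+t} = T - S_t above, so S_{m-1} = 0.
   The periodic values at m-1 and m are compatible with S_{m-1} = 0 and S_m = a
   only if a = T = 0, unless m = 1 (mod 3), i.e. k = n+1 (mod 3); in that case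
   every (a, T) occurs.  So
   u |-> (S_1, S_n) embeds the kernel in rat^2, with image 0 or rat^2. *)

Set Implicit Arguments.
Unset Strict Implicit.
Unset Printing Implicit Defensive.

Local Open Scope ring_scope.

Section PrefixSums.
Variable n : nat.
Implicit Types (x : 'I_n -> rat) (S : nat -> rat).

Definition psum x (j : nat) : rat := \sum_(i < n | (i < j)%N) x i.

Lemma psum0 x : psum x 0 = 0.
Proof. by rewrite /psum big_pred0. Qed.

Lemma psum_clamp x j : (n <= j)%N -> psum x j = psum x n.
Proof.
move=> le_nj; apply: eq_bigl => i.
by rewrite (ltn_ord i) (leq_trans (ltn_ord i) le_nj).
Qed.

Lemma psumS x j (lt_jn : (j < n)%N) : psum x j.+1 = psum x j + x (Ordinal lt_jn).
Proof.
rewrite /psum (bigD1 (Ordinal lt_jn)) //= addrC; congr (_ + _).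
by apply: eq_bigl => i; rewrite ltnS -val_eqE /= ltn_neqAle andbC.
Qed.

Lemma psumB x a b : (a <= b)%N ->
  \sum_(i < n | (a <= i < b)%N) x i = psum x b - psum x a.
Proof.
move=> le_ab; rewrite /psum (bigID (fun i : 'I_n => (i < a)%N) (fun i => (i < b)%N)) /=.
have -> : \sum_(i < n | (i < b)%N && (i < a)%N) x i = \sum_(i < n | (i < a)%N) x i.
  by apply: eq_bigl => i; lia.
by rewrite addrAC subrr add0r; apply: eq_bigl => i; lia.
Qed.

Lemma psum_eq0 x : (forall j, (j <= n)%N -> psum x j = 0) -> forall i, x i = 0.
Proof.
move=> psum_x0 i; have := psumS x (ltn_ord i).
rewrite !psum_x0 ?(ltnW (ltn_ord i)) // add0r.
by rewrite (_ : Ordinal _ = i) //; apply: val_inj.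
Qed.

Lemma psum_diff x S : S 0 = 0 -> (forall j, (n <= j)%N -> S j = S n) ->
  (forall i : 'I_n, x i = S i.+1 - S i) -> psum x =1 S.
Proof.
move=> S0 S_clamp dx.
have psum_le j : (j <= n)%N -> psum x j = S j.
  elim: j => [|j IHj] lt_jn; first by rewrite psum0 S0.
  by rewrite (psumS x lt_jn) IHj ?dx ?(ltnW lt_jn) //= addrC subrK.
move=> j; have [le_jn|lt_nj] := leqP j n; first exact: psum_le.
by rewrite psum_clamp ?S_clamp ?psum_le // ltnW.
Qed.

Definition psum_mx : 'M[rat]_(n, 2) :=
  \matrix_(i < n, c < 2) (i < if c == 0%N :> nat then 1 else n)%N%:R.

Lemma mul_psum_mx p (M : 'M_(p, n)) r (c : 'I_2) :
  (M *m psum_mx) r c = psum (M r) (if c == 0%N :> nat then 1 else n).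
Proof.
rewrite mxE /psum [RHS]big_mkcond; apply: eq_bigr => i _.
by rewrite /psum_mx mxE; case: (i < _)%N; rewrite ?mulr1 ?mulr0.
Qed.

End PrefixSums.

Definition amx_rec (n k : nat) (S : nat -> rat) :=
  forall i, (i < n)%N -> S i + S i.+1 = S (i + k).+1 + S (i - k)%N.

Section LeftKernel.
Variables n k : nat.

Lemma mulmx_Amx p (M : 'M[rat]_(p, n)) r (j : 'I_n) :
  (M *m Amx n k) r j =
  (psum (M r) j - psum (M r) (j - k)) - (psum (M r) (j + k).+1 - psum (M r) j.+1).
Proof.
rewrite -!psumB; [|lia|lia].
rewrite mxE !(big_mkcond (fun i : 'I_n => _ <= i < _)%N) -sumrB.
apply: eq_bigr => i _; rewrite mxE.
have -> : (j - k <= i < j)%N = (i < j)%N && (j <= i + k)%N by lia.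
have -> : (j.+1 <= i < (j + k).+1)%N = (j < i)%N && (i <= j + k)%N by lia.
case: ifP => [lt_ij|_]; last by case: ifP => _; rewrite ?mulrN1 ?mulr0 ?sub0r ?subr0.
by rewrite ifF ?mulr1 ?subr0 //; lia.
Qed.

Lemma Amx_kerP p (M : 'M[rat]_(p, n)) :
  M *m Amx n k = 0 <-> forall r, amx_rec n k (psum (M r)).
Proof.
split=> [MA0 r i lt_in | M_rec].
  have := congr1 (fun N : 'M_(p, n) => N r (Ordinal lt_in)) MA0.
  by rewrite /= mulmx_Amx mxE /=; lra.
by apply/matrixP => r j; rewrite mulmx_Amx mxE; have := M_rec r j (ltn_ord j); lra.
Qed.

End LeftKernel.

Definition period3 (a T : rat) (j : nat) : rat :=
  if (j %% 3 == 0)%N then 0 else if (j %% 3 == 1)%N then a else T - a.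

Lemma period3S a T j : period3 a T j + period3 a T j.+1 + period3 a T j.+2 = T.
Proof.
have [r|[r|r]] : (j %% 3 = 0 /\ j.+1 %% 3 = 1 /\ j.+2 %% 3 = 2 \/
    j %% 3 = 1 /\ j.+1 %% 3 = 2 /\ j.+2 %% 3 = 0 \/
    j %% 3 = 2 /\ j.+1 %% 3 = 0 /\ j.+2 %% 3 = 1)%N by lia.
all: by rewrite /period3; case: r => -> [-> ->] /=; lra.
Qed.

Lemma period3_0 j : period3 0 0 j = 0.
Proof. by rewrite /period3 subr0; case: ifP => // _; case: ifP. Qed.

(* The solution of [amx_rec n k] with S_1 = a and S_n = T, when k = n+1 (mod 3). *)
Definition psum_sol (n k : nat) (a T : rat) (j : nat) : rat :=
  if (j <= n - k - 1)%N then period3 a T j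
  else if (j <= k.+1)%N then (if odd (j - (n - k - 1)) then T - a else a)
  else T - period3 a T (minn j n - k.+2).

Section AmxKernel.
Variables nu k : nat.
Hypotheses (nu_le_k1 : (nu <= k.+1)%N) (k_lt_n : (k < 2 * nu)%N).
Local Notation n := (2 * nu)%N.
Local Notation m := (2 * nu - k - 1)%N.

Section Recurrence.
Variable S : nat -> rat.
Hypotheses (S0 : S 0 = 0) (S_clamp : forall j, (n <= j)%N -> S j = S n)
  (S_rec : amx_rec n k S).

Lemma amx_rec_k1 : S k.+1 = S 1.
Proof. by have := S_rec (i := 0) ltac:(lia); rewrite add0n sub0n S0 add0r addr0. Qed.

Lemma amx_rec_top i : (m <= i <= k)%N -> S i + S i.+1 = S n.
Proof.
move=> range_i; rewrite S_rec; last by lia.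
have -> : (i - k = 0)%N by lia.
by rewrite S0 addr0 S_clamp //; lia.
Qed.

Lemma amx_rec_alt t : (m + t <= k.+1)%N -> S (m + t)%N = if odd t then S n - S m else S m.
Proof.
elim: t => [|t IHt] le_tk; first by rewrite addn0.
have := amx_rec_top (i := m + t) ltac:(lia).
rewrite addnS IHt /=; last by lia.
by case: (odd t) => /=; lra.
Qed.

Lemma amx_rec_m : S m = S 1.
Proof.
have := amx_rec_alt (t := k.+1 - m) ltac:(lia).
rewrite subnKC; last by lia.
by rewrite (_ : k.+1 - m = 2 * (k.+1 - nu))%N ?oddM ?amx_rec_k1 //; lia.
Qed.

Lemma amx_rec_three i : (i + k + 3 <= n)%N -> S i + S i.+1 + S i.+2 = S n.
Proof.
move=> le_in.
have := S_rec (i := i) ltac:(lia).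
have := S_rec (i := i.+1) ltac:(lia).
have := S_rec (i := (i + k).+1) ltac:(lia).
rewrite (S_clamp (j := ((i + k).+1 + k).+1)); last by lia.
have -> : ((i + k).+1 - k = i.+1)%N by lia.
have -> : (i.+1 - k = 0)%N by lia.
have -> : (i - k = 0)%N by lia.
rewrite addSn S0; lra.
Qed.

Lemma amx_rec_low j : (j <= m)%N -> S j = period3 (S 1) (S n) j.
Proof.
suff amx_rec_pair i : (i < m)%N ->
    S i = period3 (S 1) (S n) i /\ S i.+1 = period3 (S 1) (S n) i.+1.
  by case: j => [|j] le_jm; [rewrite S0 | case: (amx_rec_pair j le_jm)].
elim: i => [|i IHi] lt_im; first by rewrite S0.
have [Si Si1] := IHi (ltnW lt_im); split=> //.
have := amx_rec_three (i := i) ltac:(lia); rewrite Si Si1.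
have := period3S (S 1) (S n) i; lra.
Qed.

Lemma amx_rec_high t : (k.+2 + t <= n)%N -> S (k.+2 + t)%N = S n - S t.
Proof.
move=> le_tn.
have := S_rec (i := t) ltac:(lia).
have := S_rec (i := k.+1 + t) ltac:(lia).
rewrite (S_clamp (j := (k.+1 + t + k).+1)); last by lia.
have -> : (k.+1 + t - k = t.+1)%N by lia.
have -> : (t - k = 0)%N by lia.
have -> : ((t + k).+1 = k.+1 + t)%N by lia.
rewrite S0 addSn; lra.
Qed.

Lemma amx_rec_eq0 : S 1 = 0 -> S n = 0 -> forall j, (j <= n)%N -> S j = 0.
Proof.
move=> S1_0 Sn_0 j le_jn.
have low i : (i <= m)%N -> S i = 0 by move/amx_rec_low ->; rewrite S1_0 Sn_0 period3_0.
have [le_jm|lt_mj] := leqP j m; first exact: low.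
have [le_jk|lt_kj] := leqP j k.+1.
  have := amx_rec_alt (t := j - m) ltac:(lia).
  by rewrite subnKC ?amx_rec_m ?S1_0 ?Sn_0 ?subr0; [case: odd | lia].
have := amx_rec_high (t := j - k.+2) ltac:(lia).
by rewrite subnKC // Sn_0 (low (j - k.+2)%N) ?subr0 //; lia.
Qed.

Lemma amx_rec_nonres : ~~ (k == n + 1 %[mod 3])%N -> S 1 = 0 /\ S n = 0.
Proof.
move=> nonres.
have S_m : period3 (S 1) (S n) m = S 1 by rewrite -amx_rec_low // amx_rec_m.
have [m0|m_gt0] := posnP m.
  have S1_0 : S 1 = 0 by rewrite -S_m m0.
  by rewrite (_ : n = k.+1) ?amx_rec_k1 //; lia.
have S_m1 : period3 (S 1) (S n) (m - 1) = 0.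
  rewrite -amx_rec_low; last by lia.
  have := amx_rec_high (t := m - 1) ltac:(lia).
  by rewrite (_ : k.+2 + (m - 1) = n)%N; [lra | lia].
move: S_m S_m1; rewrite /period3.
have [r|[r|r]] : (m %% 3 = 0 /\ (m - 1) %% 3 = 2 \/ m %% 3 = 1 \/
    m %% 3 = 2 /\ (m - 1) %% 3 = 1)%N by lia.
- by case: r => -> -> /=; split; lra.
- by move/negP: nonres; case; apply/eqP; lia.
- by case: r => -> -> /=; split; lra.
Qed.

End Recurrence.

Section Solution.
Hypothesis res : (k == n + 1 %[mod 3])%N.
Variables a T : rat.
Local Notation sol := (psum_sol n k a T).

Lemma resonant_m_mod3 : (m %% 3 = 1)%N.
Proof. by move/eqP: res; lia. Qed.

Lemma psum_sol_low j : (j <= m)%N -> sol j = period3 a T j.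
Proof. by move=> le_jm; rewrite /psum_sol le_jm. Qed.

Lemma psum_sol0 : sol 0 = 0.
Proof. by rewrite psum_sol_low. Qed.

Lemma psum_sol1 : sol 1 = a.
Proof. by have := resonant_m_mod3; rewrite psum_sol_low; [rewrite /period3 | lia]. Qed.

Lemma psum_sol_mid t : (m + t <= k.+1)%N -> sol (m + t)%N = if odd t then T - a else a.
Proof.
case: t => [|t] le_tk; first by rewrite addn0 psum_sol_low // /period3 resonant_m_mod3.
rewrite /psum_sol ifF; last by lia.
by rewrite ifT ?addKn //; lia.
Qed.

Lemma psum_sol_k1 : sol k.+1 = a.
Proof.
have := psum_sol_mid (t := k.+1 - m) ltac:(lia).
rewrite subnKC; last by lia.
by rewrite (_ : k.+1 - m = 2 * (k.+1 - nu))%N ?oddM //; lia.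
Qed.

Lemma psum_sol_high t : (k.+2 + t <= n)%N -> sol (k.+2 + t)%N = T - period3 a T t.
Proof.
move=> le_tn; rewrite /psum_sol ifF; last by lia.
by rewrite ifF ?(minn_idPl le_tn) ?addKn //; lia.
Qed.

Lemma psum_sol_clamp j : (n <= j)%N -> sol j = T.
Proof.
move=> le_nj; have := resonant_m_mod3; rewrite /psum_sol ifF; last by lia.
rewrite ifF ?(minn_idPr le_nj); last by lia.
by rewrite /period3 (_ : (n - k.+2) %% 3 = 0)%N ?subr0 //; lia.
Qed.

Lemma psum_sol_rec : amx_rec n k sol.
Proof.
move=> i lt_in; have [lt_im|le_mi] := ltnP i m.
  have -> : (i - k = 0)%N by lia.
  rewrite psum_sol0 addr0; case: i lt_im lt_in => [|i] lt_im lt_in.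
    by rewrite psum_sol0 psum_sol1 add0r psum_sol_k1.
  have -> : ((i.+1 + k).+1 = k.+2 + i)%N by lia.
  rewrite psum_sol_high ?psum_sol_low; [by have := period3S a T i; lra | lia..].
have [le_ik|lt_ki] := leqP i k.
  have -> : (i - k = 0)%N by lia.
  rewrite psum_sol0 addr0 (psum_sol_clamp (j := (i + k).+1)); last by lia.
  rewrite -(subnKC le_mi) -addnS !psum_sol_mid /=; [by case: odd => /=; lra | lia..].
have [t def_i] : exists t, i = (k.+1 + t)%N by exists (i - k.+1)%N; lia.
subst i; rewrite (psum_sol_clamp (j := (k.+1 + t + k).+1)); last by lia.
have -> : (k.+1 + t - k = t.+1)%N by lia.
rewrite (psum_sol_low (j := t.+1)); last by lia.
case: t => [|t] in lt_in lt_ki le_mi *.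
  by rewrite addn0 psum_sol_k1 -[k.+2]addn0 psum_sol_high // /period3 /=; lra.
have -> : (k.+1 + t.+1 = k.+2 + t)%N by lia.
have -> : ((k.+2 + t).+1 = k.+2 + t.+1)%N by lia.
rewrite !psum_sol_high; [by have := period3S a T t; lra | lia..].
Qed.

End Solution.

Lemma amx_rec_psum_eq0 (x : 'I_n -> rat) :
  amx_rec n k (psum x) -> psum x 1 = 0 -> psum x n = 0 -> forall i, x i = 0.
Proof.
move=> x_rec x1 xn; apply: psum_eq0; apply: amx_rec_eq0 => //.
- exact: psum0.
- exact: psum_clamp.
Qed.

Lemma rank_kermx_Amx_le2 : (\rank (kermx (Amx n k)) <= 2)%N.
Proof.
set M := (kermx (Amx n k) :&: kermx (psum_mx n))%MS.
have M0 : M = 0.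
  have /Amx_kerP M_rec : M *m Amx n k = 0 by apply/sub_kermxP; exact: capmxSl.
  have ML (c : 'I_2) r : (M *m psum_mx n) r c = 0.
    by rewrite (sub_kermxP (capmxSr _ _)) mxE.
  apply/matrixP => r i; rewrite mxE; apply: amx_rec_psum_eq0 => //.
  - by rewrite -(ML ord0 r) mul_psum_mx.
  - by rewrite -(ML ord_max r) mul_psum_mx.
have /mxrank_injP <- : M == 0 by rewrite M0.
exact: rank_leq_col.
Qed.

Lemma rank_kermx_Amx_nonres :
  ~~ (k == n + 1 %[mod 3])%N -> \rank (kermx (Amx n k)) = 0%N.
Proof.
move=> nonres; apply/eqP; rewrite mxrank_eq0; apply/eqP/matrixP => r i.
have /Amx_kerP K_rec := mulmx_ker (Amx n k).
have [x1 xn] := amx_rec_nonres (psum0 _) (psum_clamp _) (K_rec r) nonres.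
by rewrite [RHS]mxE; apply: amx_rec_psum_eq0.
Qed.

Lemma rank_kermx_Amx_res :
  (k == n + 1 %[mod 3])%N -> (2 <= \rank (kermx (Amx n k)))%N.
Proof.
move=> res.
pose sol (r : 'I_2) := psum_sol n k (r == 0%N :> nat)%:R (r == 1%N :> nat)%:R.
pose V : 'M_(2, n) := \matrix_(r, i) (sol r i.+1 - sol r i).
have psumV r : psum (V r) =1 sol r.
  by apply: psum_diff => [|j le_nj|i]; [exact: psum_sol0 | rewrite /sol !psum_sol_clamp | rewrite mxE].
have VK : (V <= kermx (Amx n k))%MS.
  apply/sub_kermxP/Amx_kerP => r i lt_in; rewrite !psumV; exact: psum_sol_rec.
have VL : V *m psum_mx n = 1%:M.
  apply/matrixP => r c; rewrite mul_psum_mx psumV !mxE.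
  by case: r c => [[|[|//]] ?] [[|[|//]] ?]; rewrite /sol /= ?psum_sol1 ?psum_sol_clamp.
rewrite -[X in (X <= _)%N](mxrank1 rat 2) -VL.
exact: leq_trans (mxrankM_maxl _ _) (mxrankS VK).
Qed.

End AmxKernel.

Local Close Scope ring_scope.

Theorem lemma9p1 (nu k : nat) :
  (1 <= nu - 1)%N -> (nu - 1 <= k)%N -> (k <= 2 * nu - 1)%N ->
  Nnull (2 * nu) k = (if k == (2 * nu + 1) %[mod 3] then 2 else 0)%N.
Proof.
move=> nu_ge2 le_nu_k le_k_2nu; rewrite /Nnull -mxrank_ker.
have nu_le_k1 : nu <= k.+1 by lia.
have k_lt_n : k < 2 * nu by lia.
case: ifP => [res | /negbT nonres]; last exact: rank_kermx_Amx_nonres.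
by apply/eqP; rewrite eqn_leq rank_kermx_Amx_le2 ?rank_kermx_Amx_res.
Qed.
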